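(* Let $A\in{\operatorname{\mathsf{TPD}}}_n(\mathbb{S}_{\max}^\vee)$, with $\gamma_i=a_{ii}$ ordered so that $\gamma_1\succeq\cdots\succeq\gamma_n$, and assume $\gamma=\gamma_1$ is simple, i.e. $\gamma_1\succ\gamma_2$. Let $v^{(1)}=(\gamma I\ominus A)^{\mathrm{adj}}_{:,1}$. If $v^{(1)}$ does not belong to $(\mathbb{S}_{\max}^\vee)^n$, then $A$ has no strong $\mathbb{S}_{\max}$-eigenvector associated to the eigenvalue $\gamma$.
   Context: $\mathbb{S}_{\max}$ is the symmetrized tropical semiring over a divisible totally ordered abelian group, with zero $\mathbf{0}$, unit $\mathbf{1}$, minus $\ominus$; $\mathbb{S}_{\max}^\vee$ is the set of signed elements (positive, negative or $\mathbf{0}$). $a\preceq b$ iff $b=a\oplus b$; $a\succ b$ iff $b\preceq a$ and $a\ne b$. $A\in{\operatorname{\mathsf{TPD}}}_n(\mathbb{S}_{\max}^\vee)$: $A$ symmetric with signed entries, $\mathbf{0}<a_{ii}$ and $a_{ij}^2<a_{ii}a_{jj}$ for $i\ne j$ (where $a<b$ iff $b\ominus a$ is positive). Its $\mathbb{S}_{\max}$-eigenvalues are its diagonal entries. $(M^{\mathrm{adj}})_{ij}=(\ominus\mathbf{1})^{i+j}\det M[\hat j,\hat i]$ (signed determinant), $M_{:,1}$ the first column. A strong $\mathbb{S}_{\max}$-eigenvector for $\gamma$ is $v\in(\mathbb{S}_{\max}^\vee)^n\setminus\{\mathbf{0}\}$ with $Av=\gamma v$. *)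

From HB Require Import structures.
From mathcomp Require Import all_boot all_order all_algebra all_fingroup.
Set Implicit Arguments. Unset Strict Implicit. Unset Printing Implicit Defensive.
Import Order.TTheory GRing.Theory Num.Theory.
Local Open Scope ring_scope.

(* The value group: a (partially) ordered Z-module, required by the
   hypothesis [div_tot_ord_group] below to be a divisible totally ordered
   abelian group (the group is written additively: the tropical product of
   moduli is [+], the tropical unit modulus is [0]). *)
Definition div_tot_ord_group (G : porderZmodType) : Prop :=
  [/\ (forall x y : G, (x <= y) || (y <= x)),
      (forall x y z : G, x <= y -> x + z <= y + z) &
      (forall (x : G) (k : nat), (0 < k)%N -> exists y : G, y *+ k = x)].

(* Symmetrized tropical semiring S_max over G:
   zero, positive g (= g), negative g (= ⊖g), balanced g (= g•). *)
Inductive smax (G : Type) : Type :=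
  | SZero | SPos of G | SNeg of G | SBal of G.
Arguments SZero {G}.

Section Smax.
Variable G : porderZmodType.
Implicit Types a b : smax G.

Definition sone : smax G := SPos 0.

Definition sopp a : smax G :=
  match a with SZero => SZero | SPos g => SNeg g | SNeg g => SPos g | SBal g => SBal g end.

(* sum of two elements of the same modulus g *)
Definition sadd_eq (a b : smax G) (g : G) : smax G :=
  match a, b with
  | SPos _, SPos _ => SPos g
  | SNeg _, SNeg _ => SNeg g
  | _, _ => SBal g
  end.

Definition sadd a b : smax G :=
  match a, b with
  | SZero, _ => b
  | _, SZero => a
  | SPos x, _ | SNeg x, _ | SBal x, _ =>
    match b with
    | SZero => a
    | SPos y | SNeg y | SBal y =>
      if x < y then b else if y < x then a else sadd_eq a b x
    end
  end.

Definition smul a b : smax G :=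
  match a, b with
  | SZero, _ | _, SZero => SZero
  | SPos x, SPos y | SNeg x, SNeg y => SPos (x + y)
  | SPos x, SNeg y | SNeg x, SPos y => SNeg (x + y)
  | SBal x, SPos y | SBal x, SNeg y | SBal x, SBal y
  | SPos x, SBal y | SNeg x, SBal y => SBal (x + y)
  end.

Definition ssigned a : Prop := match a with SBal _ => False | _ => True end.
Definition spositive a : Prop := match a with SPos _ => True | _ => False end.

Definition slt a b : Prop := spositive (sadd b (sopp a)).
Definition spreceq a b : Prop := b = sadd a b.
Definition ssucc a b : Prop := spreceq b a /\ a <> b.

Definition ssignpow (k : nat) : smax G := if odd k then sopp sone else sone.

Definition sdet (n : nat) (M : 'M[smax G]_n) : smax G :=
  \big[sadd/SZero]_(s : 'S_n)
     smul (ssignpow (odd_perm s)) (\big[smul/sone]_(i < n) M i (s i)).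

(* (M^adj)_{ij} = (⊖1)^{i+j} det M[ĵ, î]  (delete row j and column i) *)
Definition sadj (n : nat) (M : 'M[smax G]_n.+1) : 'M[smax G]_n.+1 :=
  \matrix_(i, j) smul (ssignpow (i + j)%N) (sdet (row' j (col' i M))).

Definition sshift (n : nat) (g : smax G) (A : 'M[smax G]_n) : 'M[smax G]_n :=
  \matrix_(i, j) sadd (if i == j then g else SZero) (sopp (A i j)).

Definition TPD (n : nat) (A : 'M[smax G]_n) : Prop :=
  [/\ forall i j, A i j = A j i,
      forall i j, ssigned (A i j),
      forall i, slt SZero (A i i) &
      forall i j, i != j -> slt (smul (A i j) (A i j)) (smul (A i i) (A j j))].

Definition smulmxv (n : nat) (A : 'M[smax G]_n) (v : 'I_n -> smax G) : 'I_n -> smax G :=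
  fun i => \big[sadd/SZero]_(j < n) smul (A i j) (v j).

Definition strong_eigenvector (n : nat) (A : 'M[smax G]_n) (g : smax G)
    (v : 'I_n -> smax G) : Prop :=
  [/\ forall i, ssigned (v i), exists i, v i <> SZero &
      forall i, smulmxv A v i = smul g (v i)].

End Smax.

(* Let A be (n+1) x (n+1), v a strong eigenvector for g = a_00, and write |.| for
   moduli.  Row k of A v = g v gives |a_kj| + |v_j| <= |g| + |v_k| for all j, and
   in case of equality ("k -> j is tight") the sign of a_kj is forced.  For k <> 0
   with v_k <> 0 the maximum is reached off the diagonal, because a_kk < g; positive
   definiteness (a_kj^2 < a_kk a_jj) makes the potential |a_kk| + 2|v_k| strictly
   increase along tight edges.  Hence v_0 <> 0, tight edges cannot cycle away from
   0, and from every i they lead to 0.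
   In the minor of g I ⊖ A deleting row 0 and column i, view each term as a
   permutation s of {0..n} with s 0 = i.  Telescoping the bounds above shows that
   every term has modulus at most n|g| + |v_i| - |v_0|; a term reaching this bound
   uses only fixed points and tight edges, so s is one cycle through 0 plus fixed
   points, its parity is the number of points other than 0 that it moves, and the
   term has the sign of (⊖1)^i v_0 v_i.  A tight path from i to 0 gives such a
   term, so the minor is signed (it vanishes when v_i = 0). *)

From HB Require Import structures.
From mathcomp Require Import all_boot all_order all_algebra all_fingroup.
Set Implicit Arguments. Unset Strict Implicit. Unset Printing Implicit Defensive.
Import Order.TTheory GRing.Theory Num.Theory.
Local Open Scope ring_scope.

Definition smax_code G (a : smax G) : option (bool * bool * G) :=
  match a with
  | SZero => None
  | SPos x => Some (false, false, x)
  | SNeg x => Some (false, true, x)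
  | SBal x => Some (true, false, x)
  end.

Definition smax_decode G (c : option (bool * bool * G)) : smax G :=
  match c with
  | None => SZero
  | Some (false, false, x) => SPos x
  | Some (false, true, x) => SNeg x
  | Some (true, _, x) => SBal x
  end.

Lemma smax_codeK G : cancel (@smax_code G) (@smax_decode G).
Proof. by case. Qed.

HB.instance Definition _ (G : eqType) :=
  Equality.copy (smax G) (can_type (@smax_codeK G)).

Lemma perm_closedV (T : finType) (s : {perm T}) (P : pred T) :
  (forall k, P k -> P (s k)) -> forall k, P (s k) -> P k.
Proof.
move=> Ps k; have Piter m j : P j -> P ((s ^+ m)%g j).
  by elim: m j => [|m IH] j Pj; rewrite ?expg0 ?perm1 // expgSr permM; apply/Ps/IH.
by move/(Piter #[s]%g.-1); rewrite -permM -expgS prednK ?order_gt0 // expg_order perm1.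
Qed.

Lemma lift_perm_surj n (i : 'I_n.+1) (s : 'S_n.+1) :
  s ord0 = i -> exists sig : 'S_n, lift_perm ord0 i sig = s.
Proof.
move=> s0; have s_neq_i p : s (lift ord0 p) != i.
  by rewrite -s0 (inj_eq perm_inj) eq_sym neq_lift.
pose f p := odflt p (unlift i (s (lift ord0 p))).
have fE p : lift i (f p) = s (lift ord0 p).
  by rewrite /f; case: unliftP => [q -> //|e]; move: (s_neq_i p); rewrite e eqxx.
have f_inj : injective f.
  by move=> p q e; apply/(@lift_inj _ ord0)/(@perm_inj _ s); rewrite -!fE e.
exists (perm f_inj); apply/permP => k; case: (unliftP ord0 k) => [p ->|->].
  by rewrite lift_perm_lift permE fE.
by rewrite lift_perm_id s0.
Qed.

Lemma big_lift_perm (R : Type) (idx : R) (op : Monoid.com_law idx) n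
    (s : 'S_n.+1) (F : 'I_n.+1 -> R) :
  op (F (s ord0)) (\big[op/idx]_(p < n) F (s (lift ord0 p))) =
  op (F ord0) (\big[op/idx]_(p < n) F (lift ord0 p)).
Proof.
rewrite -(big_ord_recl _ (fun k => F (s k))) -big_ord_recl.
by rewrite [RHS](reindex_inj (@perm_inj _ s)).
Qed.

Lemma telescope_lift_perm (V : zmodType) n (s : 'S_n.+1) (f : 'I_n.+1 -> V) :
  \sum_(p < n) (f (lift ord0 p) - f (s (lift ord0 p))) = f (s ord0) - f ord0.
Proof.
have := big_lift_perm +%R s f; rewrite big_split sumrN /= => e.
by apply/eqP; rewrite subr_eq addrAC e addrAC subrr add0r.
Qed.

Lemma telescope_lift_perm_addb n (s : 'S_n.+1) (f : 'I_n.+1 -> bool) :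
  \big[addb/false]_(p < n) (f (lift ord0 p) (+) f (s (lift ord0 p))) =
  f ord0 (+) f (s ord0).
Proof.
have := big_lift_perm addb s f; rewrite big_split /=.
by move: (f _) (f _) (\big[_/_]_(_ < n) _) (\big[_/_]_(_ < n) _) => [] [] [] [].
Qed.

Lemma perm_fix_but_one (T : finType) (x0 : T) (s : {perm T}) :
  (forall k, k != x0 -> s k = k) -> s = 1%g.
Proof.
move=> fix_s; apply/permP => k; rewrite perm1.
case: (eqVneq k x0) => [->|/fix_s //]; apply/eqP/negPn/negP => sx0.
by move/perm_inj: (fix_s _ sx0) => e; rewrite e eqxx in sx0.
Qed.

Lemma mul_tpermE (T : finType) (x0 k : T) (s : {perm T}) : k != x0 -> s k = x0 ->
  let s' := (s * tperm k x0)%g in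
  s' k = k /\ forall w, w != k -> s' w = if s w == k then x0 else s w.
Proof.
move=> kx0 skx0 /=; rewrite !permM skx0 tpermR; split=> // w wk.
have swx0 : s w != x0 by rewrite -skx0 (inj_eq perm_inj).
rewrite permM; case: (eqVneq (s w) k) => [->|swk]; first by rewrite tpermL ?eqxx.
by rewrite tpermD 1?eq_sym ?(negPf swk).
Qed.

Section Potential.
Variables (d : Order.disp_t) (U : porderType d) (T : finType) (phi : T -> U).
Local Open Scope order_scope.

Definition n_above k := #|[set p | phi k < phi p]|.

Lemma n_above_lt k j : phi k < phi j -> (n_above j < n_above k)%N.
Proof.
move=> kj; apply: proper_card; apply/properP; split.
  by apply/subsetP => p; rewrite !inE; apply: lt_trans.
by exists j; rewrite !inE ?ltxx.
Qed.

Lemma exists_maximal (P : pred T) :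
  (exists x, P x) -> exists2 x, P x & forall y, P y -> ~~ (phi x < phi y).
Proof.
case=> x; move: {2}(n_above x).+1 (ltnSn (n_above x)) => m.
elim: m x => // m IH x lt_m Px.
have [y /andP[Py xy]|none] := pickP [pred y | P y && (phi x < phi y)].
  exact: IH (leq_trans (n_above_lt xy) _) Py.
by exists x => // y Py; apply/negP => xy; move: (none y); rewrite /= Py xy.
Qed.

Lemma odd_perm_increasing (x0 : T) (s : {perm T}) :
  (forall k, k != x0 -> s k != k -> phi k < phi (s k)) ->
  odd_perm s = \big[addb/false]_k ((k != x0) && (s k != k)).
Proof.
pose moved (t : {perm T}) := [set k | (k != x0) && (t k != k)].
move: {2}#|moved s|.+1 (ltnSn #|moved s|) => m.
elim: m s => // m IH s card_lt incr.
have [k0 k0_moved|none] := pickP (mem (moved s)); last first.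
  rewrite (@perm_fix_but_one _ x0 s) ?odd_perm1 ?big1 // => [k _|k kx0].
    by rewrite perm1 eqxx andbF.
  by apply/eqP/negPn/negP => sk; move: (none k); rewrite /= inE kx0 sk.
have [k] := exists_maximal (ex_intro _ k0 k0_moved).
rewrite /= inE => /andP[kx0 sk] k_max.
have skx0 : s k = x0.
  apply/eqP/negPn/negP => skx0; have ssk : s (s k) != s k by rewrite (inj_eq perm_inj).
  by move: (k_max (s k)); rewrite inE skx0 ssk (incr _ kx0 sk) => /(_ isT).
have [s'k s'E] := mul_tpermE kx0 skx0; set s' := (s * _)%g in s'k s'E.
have movedE w : w != x0 -> w != k -> (s' w != w) = (s w != w).
  move=> wx0 wk; rewrite s'E //.
  by case: (eqVneq (s w) k) => [->|//]; rewrite eq_sym wx0 eq_sym wk.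
have incr' w : w != x0 -> s' w != w -> phi w < phi (s' w).
  move=> wx0 s'w; have wk : w != k by apply: contraTneq s'w => ->; rewrite s'k eqxx.
  have sw : s w != w by rewrite -movedE.
  move: s'w; rewrite s'E //; case: (eqVneq (s w) k) => [swk _|_ _]; last exact: incr.
  by rewrite -skx0; apply: lt_trans (incr _ wx0 sw) _; rewrite swk; apply: incr.
have moved'E : moved s' = moved s :\ k.
  apply/setP => w; rewrite !inE; case: (eqVneq w k) => [->|wk] /=; first by rewrite s'k eqxx andbF.
  by case: (eqVneq w x0) => //= wx0; rewrite movedE.
have card' : (#|moved s'| < m)%N.
  by move: card_lt; rewrite moved'E (cardsD1 k) inE kx0 sk.
have odd_s : odd_perm s = ~~ odd_perm s'.
  by rewrite odd_permM odd_tperm kx0 addbT negbK.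
rewrite odd_s (IH s' card' incr') (bigD1 k (P := predT)) // [RHS](bigD1 k) //=.
rewrite kx0 sk s'k eqxx andbF /=.
congr (~~ _); apply: eq_bigr => w wk; case: (eqVneq w x0) => //= wx0; exact: movedE.
Qed.

End Potential.

Section SymmetrizedTropical.
Variable G : porderZmodType.
Hypothesis HG : div_tot_ord_group G.
Implicit Types (x y z w : G) (a b c : smax G).

Lemma comparableG x y : (x >=< y)%O.
Proof. by case: HG => total _ _; apply: total. Qed.

Lemma lerD2rG z x y : (x + z <= y + z) = (x <= y).
Proof.
case: HG => _ mono _; apply/idP/idP => [|/mono //].
by move/(mono _ _ (- z)); rewrite !addrK.
Qed.

Lemma ltrD2rG z x y : (x + z < y + z) = (x < y).
Proof. by rewrite !lt_neqAle lerD2rG (inj_eq (addIr z)). Qed.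

Lemma lerD2lG z x y : (z + x <= z + y) = (x <= y).
Proof. by rewrite ![z + _]addrC lerD2rG. Qed.

Lemma ltrD2lG z x y : (z + x < z + y) = (x < y).
Proof. by rewrite ![z + _]addrC ltrD2rG. Qed.

Lemma lerDG x y z w : x <= y -> z <= w -> x + z <= y + w.
Proof. by move=> xy zw; rewrite (le_trans (_ : _ <= y + z)) ?lerD2rG ?lerD2lG. Qed.

Lemma ltr_leDG x y z w : x < y -> z <= w -> x + z < y + w.
Proof. by move=> xy zw; rewrite (lt_le_trans (_ : _ < y + z)) ?ltrD2rG ?lerD2lG. Qed.

Lemma ltrDG x y z w : x < y -> z < w -> x + z < y + w.
Proof. by move=> xy /ltW; apply: ltr_leDG. Qed.

Lemma ltr_doubleG x y : x + x < y + y -> x < y.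
Proof.
case: (comparable_ltgtP (comparableG x y)) => // [yx|->]; last by rewrite ltxx.
by rewrite lt_gtF // ltrDG.
Qed.

Lemma ler_sumG (I : finType) (P : pred I) (f h : I -> G) :
  (forall p, f p <= h p) -> \sum_(p | P p) f p <= \sum_(p | P p) h p.
Proof. by move=> fh; elim/big_rec2: _ => // j a b _; apply: lerDG. Qed.

Lemma ltr_sumG (I : finType) (f h : I -> G) :
  (forall p, f p <= h p) -> (exists p, f p < h p) -> \sum_p f p < \sum_p h p.
Proof.
move=> fh [p lt_p]; rewrite (bigD1 p) //= [X in _ < X](bigD1 p) //=.
exact: ltr_leDG lt_p (ler_sumG _ fh).
Qed.

Definition smod a : G := match a with SZero => 0 | SPos x | SNeg x | SBal x => x end.
Definition sneg a : bool := if a is SNeg _ then true else false.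
Definition signed_elt (b : bool) x : smax G := if b then SNeg x else SPos x.

Lemma signed_eltE a : ssigned a -> a != SZero -> a = signed_elt (sneg a) (smod a).
Proof. by case: a. Qed.

Lemma signed_elt_neq0 (b : bool) x : signed_elt b x != SZero. Proof. by case: b. Qed.
Lemma signed_elt_signed (b : bool) x : ssigned (signed_elt b x). Proof. by case: b. Qed.
Lemma smod_signed_elt (b : bool) x : smod (signed_elt b x) = x. Proof. by case: b. Qed.
Lemma sneg_signed_elt (b : bool) x : sneg (signed_elt b x) = b. Proof. by case: b. Qed.

Lemma signed_elt_inj (b1 b2 : bool) x1 x2 :
  signed_elt b1 x1 = signed_elt b2 x2 -> b1 = b2 /\ x1 = x2.
Proof.
move=> e; split; first by rewrite -(sneg_signed_elt b1 x1) e sneg_signed_elt.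
by rewrite -(smod_signed_elt b1 x1) e smod_signed_elt.
Qed.

Lemma smul_signed_elt (b1 b2 : bool) x y :
  smul (signed_elt b1 x) (signed_elt b2 y) = signed_elt (b1 (+) b2) (x + y).
Proof. by case: b1; case: b2. Qed.

Lemma ssignpow_bool (b : bool) : ssignpow G b = signed_elt b 0.
Proof. by case: b. Qed.

Lemma smul0r a : smul SZero a = SZero. Proof. by case: a. Qed.
Lemma smulr0 a : smul a SZero = SZero. Proof. by case: a. Qed.

Lemma smul_eq0 a b : (smul a b == SZero) = (a == SZero) || (b == SZero).
Proof. by case: a => [|x|x|x]; case: b. Qed.

Lemma smul_self a : ssigned a -> a != SZero -> smul a a = SPos (smod a + smod a).
Proof. by case: a. Qed.

Lemma smul_signed a b : ssigned a -> ssigned b -> ssigned (smul a b).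
Proof. by case: a; case: b. Qed.

Lemma sopp_signed a : ssigned a -> ssigned (sopp a). Proof. by case: a. Qed.
Lemma sopp_eq0 a : (sopp a == SZero) = (a == SZero). Proof. by case: a. Qed.
Lemma smod_sopp a : smod (sopp a) = smod a. Proof. by case: a. Qed.

Lemma sneg_sopp a : ssigned a -> a != SZero -> sneg (sopp a) = ~~ sneg a.
Proof. by case: a. Qed.

Ltac case_modulus_lt := match goal with
  | |- context [if ?x < ?y then _ else _] =>
      case: (comparable_ltgtP (comparableG x y)) => [?|?|?]; try subst
  | _ => idtac end.

Ltac sadd_cases a b :=
  case: a => [|?|?|?]; case: b => [|?|?|?]; rewrite /sadd /sadd_eq /=; case_modulus_lt.

Lemma sadd0l b : sadd SZero b = b. Proof. by case: b. Qed.
Lemma sadd0r a : sadd a SZero = a. Proof. by case: a. Qed.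
Lemma saddC a b : sadd a b = sadd b a. Proof. by sadd_cases a b. Qed.

Lemma sadd_signed_idem c : ssigned c -> sadd c c = c.
Proof. by case: c => // x _; rewrite /sadd ltxx. Qed.

Lemma sadd_eq0 a b : sadd a b = SZero -> a = SZero /\ b = SZero.
Proof. by sadd_cases a b. Qed.

Lemma sadd_neq0l a b : a != SZero -> sadd a b != SZero /\ smod a <= smod (sadd a b).
Proof. by sadd_cases a b => // _; rewrite ?lexx ?ltW. Qed.

Lemma sadd_smod a b : sadd a b != SZero ->
  (a != SZero /\ smod a = smod (sadd a b)) \/ (b != SZero /\ smod b = smod (sadd a b)).
Proof. by sadd_cases a b => // _; first [by left | by right]. Qed.

Lemma spreceq_signedP a c : ssigned c -> c != SZero ->
  spreceq a c <-> [\/ a = SZero, smod a < smod c | a = c].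
Proof.
rewrite /spreceq; case: c => // y _ _;
  case: a => [|x|x|x]; rewrite /sadd /sadd_eq /=; case_modulus_lt;
  split=> [e|[e|e|e]] //; try by [constructor 1 | constructor 2 | constructor 3].
Qed.

Lemma spreceq_saddl a b : ssigned (sadd a b) -> sadd a b != SZero -> spreceq a (sadd a b).
Proof.
move=> sab nab; apply/spreceq_signedP => //; move: sab nab.
by sadd_cases a b => // _ _; try by [constructor 1 | constructor 2 | constructor 3].
Qed.

Lemma spreceq_sadd c a b : ssigned c -> c != SZero ->
  spreceq a c -> spreceq b c -> spreceq (sadd a b) c.
Proof.
move=> sc nc; have P := spreceq_signedP _ sc nc.
move=> /P[->|ac|->] /P[->|bc|->]; rewrite ?sadd0l ?sadd0r ?sadd_signed_idem //; apply/P;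
  try by [constructor 1 | constructor 2 | constructor 3].
- have [->|nab] := eqVneq (sadd a b) SZero; first by constructor 1.
  by constructor 2; case: (sadd_smod nab) => -[_ <-].
- by constructor 3; apply/esym/P; constructor 2.
- by constructor 3; rewrite saddC; apply/esym/P; constructor 2.
Qed.

Section BigSadd.
Variables (I : eqType) (F : I -> smax G).
Local Notation S r := (\big[@sadd G/SZero]_(j <- r) F j).

Lemma big_sadd_eq0 r : S r = SZero -> forall j, j \in r -> F j = SZero.
Proof.
elim: r => [|x r IH] //; rewrite big_cons => /sadd_eq0[Fx0 Sr0] j.
by rewrite in_cons => /orP[/eqP-> //|]; apply: IH.
Qed.

Lemma big_sadd_smod r j : j \in r -> F j != SZero ->
  S r != SZero /\ smod (F j) <= smod (S r).
Proof.
elim: r => [|x r IH] //; rewrite in_cons big_cons => /orP[/eqP-> Fj|jr Fj].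
  exact: sadd_neq0l.
have [Sr jSr] := IH jr Fj; have [] := sadd_neq0l (F x) Sr; rewrite saddC => -> Srx.
by split=> //; apply: le_trans Srx.
Qed.

Lemma big_sadd_smod_attained r : S r != SZero ->
  exists2 j, F j != SZero & smod (F j) = smod (S r).
Proof.
elim: r => [|x r IH]; rewrite ?big_nil ?big_cons // => /sadd_smod[[Fx <-]|[Sr <-]].
  by exists x.
by have [j Fj e] := IH Sr; exists j.
Qed.

Lemma big_sadd_spreceq_inv r c : ssigned c -> c != SZero -> S r = c ->
  forall j, j \in r -> spreceq (F j) c.
Proof.
move=> sc nc; elim: r c sc nc => [|x r IH] c sc nc //; rewrite big_cons => Sc j.
have P := spreceq_signedP _ sc nc.
rewrite in_cons => /orP[/eqP-> | jr]; first by rewrite -Sc; apply: spreceq_saddl; rewrite Sc.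
have : spreceq (S r) c by rewrite -Sc saddC; apply: spreceq_saddl; rewrite saddC Sc.
move=> /P[Sr0|Src|Src]; first by apply/P; constructor 1; apply: big_sadd_eq0 Sr0 _ jr.
  have [->|Fj] := eqVneq (F j) SZero; apply/P; first by constructor 1.
  by constructor 2; have [_ le] := big_sadd_smod jr Fj; apply: le_lt_trans le Src.
exact: IH.
Qed.

Lemma big_sadd_spreceq r c : ssigned c -> c != SZero ->
  (forall j, j \in r -> spreceq (F j) c) -> spreceq (S r) c.
Proof.
move=> sc nc; elim: r => [|x r IH] Fc; first by rewrite big_nil /spreceq sadd0l.
rewrite big_cons; apply: spreceq_sadd => //; first by apply: Fc; rewrite mem_head.
by apply: IH => j jr; apply: Fc; rewrite in_cons jr orbT.
Qed.

Lemma big_sadd_eq r c : ssigned c -> c != SZero ->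
  (forall j, j \in r -> spreceq (F j) c) -> (exists2 j, j \in r & F j = c) -> S r = c.
Proof.
move=> sc nc; elim: r => [|x r IH] Fc [j] //; rewrite big_cons in_cons.
have Src : spreceq (S r) c.
  by apply: big_sadd_spreceq => // k kr; apply: Fc; rewrite in_cons kr orbT.
case/orP => [/eqP-> ->|jr Fj]; first by rewrite saddC.
rewrite IH; [by apply/esym/Fc; rewrite mem_head | | by exists j].
by move=> k kr; apply: Fc; rewrite in_cons kr orbT.
Qed.

End BigSadd.

Section BigSmul.
Variables (I : eqType) (F : I -> smax G).

Lemma big_smul_signed r : (forall j, j \in r -> ssigned (F j) /\ F j != SZero) ->
  \big[@smul G/sone G]_(j <- r) F j =
  signed_elt (\big[addb/false]_(j <- r) sneg (F j)) (\sum_(j <- r) smod (F j)).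
Proof.
elim: r => [|x r IH] Fs; first by rewrite !big_nil.
rewrite !big_cons IH => [|j jr]; last by apply: Fs; rewrite in_cons jr orbT.
by have [sx nx] := Fs x (mem_head _ _); rewrite {1}(signed_eltE sx nx) smul_signed_elt.
Qed.

Lemma big_smul_eq0 r : (exists2 j, j \in r & F j = SZero) ->
  \big[@smul G/sone G]_(j <- r) F j = SZero.
Proof.
elim: r => [|x r IH] [j] //; rewrite big_cons in_cons => /orP[/eqP-> ->|jr Fj].
  by rewrite smul0r.
by rewrite IH ?smulr0 //; exists j.
Qed.

End BigSmul.

Lemma slt_SPos x y : slt (SPos x) (SPos y) -> x < y.
Proof. by rewrite /slt /sadd /=; case: (comparable_ltgtP (comparableG x y)). Qed.

Lemma spreceq_SPos x y : spreceq (SPos x) (SPos y) -> x <= y.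
Proof.
rewrite /spreceq /sadd /sadd_eq /=.
by case: (comparable_ltgtP (comparableG x y)) => // yx [e]; rewrite e ltxx in yx.
Qed.

Lemma ssignpow_signed k : ssigned (ssignpow G k).
Proof. by rewrite /ssignpow; case: odd. Qed.

Lemma TPD_diagE n (A : 'M[smax G]_n) k : TPD A -> A k k = SPos (smod (A k k)).
Proof. by case=> _ _ /(_ k); rewrite /slt; case: (A k k). Qed.

Lemma TPD_diag_simple n (A : 'M[smax G]_n.+1) : TPD A ->
  (forall i j : 'I_n.+1, (i <= j)%N -> spreceq (A j j) (A i i)) ->
  (forall i : 'I_n.+1, nat_of_ord i = 1%N -> ssucc (A ord0 ord0) (A i i)) ->
  forall k, k != ord0 -> smod (A k k) < smod (A ord0 ord0).
Proof.
move=> HA Hord Hsucc k k0.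
have lt1n : (1 < n.+1)%N by apply: leq_ltn_trans (ltn_ord k); rewrite lt0n.
pose one := Ordinal lt1n; have [A10 A01] := Hsucc one erefl.
have := Hord one k; rewrite lt0n k0 => /(_ isT).
rewrite (TPD_diagE k HA) (TPD_diagE one HA) => /spreceq_SPos /le_lt_trans; apply.
move: A10 A01; rewrite (TPD_diagE one HA) (TPD_diagE ord0 HA) => /spreceq_SPos.
by rewrite lt_neqAle => -> ne; rewrite /= andbT; apply/eqP => e; apply: ne; rewrite e.
Qed.

Lemma lift0_neq0 n (p : 'I_n) : lift ord0 p != ord0 :> 'I_n.+1.
Proof. by rewrite eq_sym neq_lift. Qed.

Section Eigenvector.
Variables (n : nat) (A : 'M[smax G]_n.+1) (v : 'I_n.+1 -> smax G).
Hypothesis HA : TPD A.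
Hypothesis diag_simple : forall k, k != ord0 -> smod (A k k) < smod (A ord0 ord0).
Hypothesis Hv : strong_eigenvector A (A ord0 ord0) v.

Local Notation g := (smod (A ord0 ord0)).

Lemma A_signed k j : ssigned (A k j). Proof. by case: HA. Qed.
Lemma v_signed k : ssigned (v k). Proof. by case: Hv. Qed.

Lemma A_offdiag_lt k j : k != j -> A k j != SZero ->
  smod (A k j) + smod (A k j) < smod (A k k) + smod (A j j).
Proof.
move=> kj Akj; case: HA => _ _ _ /(_ k j kj).
by rewrite (smul_self (A_signed k j) Akj) (TPD_diagE k HA) (TPD_diagE j HA); apply: slt_SPos.
Qed.

Lemma A_offdiag_lt_top k j : k != ord0 -> j != ord0 -> k != j -> A k j != SZero ->
  smod (A k j) < g.
Proof.
move=> k0 j0 kj Akj; apply: ltr_doubleG; apply: lt_trans (A_offdiag_lt kj Akj) _.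
exact: ltrDG (diag_simple k0) (diag_simple j0).
Qed.

Lemma eigen_row k : \big[@sadd G/SZero]_(j < n.+1) smul (A k j) (v j) = smul (A ord0 ord0) (v k).
Proof. by case: Hv => _ _ /(_ k). Qed.

Lemma eigen_term_eq0 k j : v k = SZero -> smul (A k j) (v j) = SZero.
Proof. by move=> vk; move: (eigen_row k); rewrite vk smulr0 => /big_sadd_eq0; apply. Qed.

Lemma eigen_rhsE k : v k != SZero ->
  smul (A ord0 ord0) (v k) = signed_elt (sneg (v k)) (g + smod (v k)).
Proof.
move=> vk; rewrite [in LHS](signed_eltE (v_signed k) vk) [in LHS](TPD_diagE ord0 HA).
exact: (smul_signed_elt false).
Qed.

Lemma eigen_termE k j : A k j != SZero -> v j != SZero ->
  smul (A k j) (v j) = signed_elt (sneg (A k j) (+) sneg (v j)) (smod (A k j) + smod (v j)).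
Proof.
by move=> Akj vj; rewrite {1}(signed_eltE (A_signed k j) Akj) {1}(signed_eltE (v_signed j) vj)
  smul_signed_elt.
Qed.

Lemma eigen_term_le k j : v k != SZero -> v j != SZero -> A k j != SZero ->
  smod (A k j) + smod (v j) < g + smod (v k) \/
  smod (A k j) + smod (v j) = g + smod (v k) /\ sneg (A k j) (+) sneg (v j) = sneg (v k).
Proof.
move=> vk vj Akj; have /spreceq_signedP := big_sadd_spreceq_inv (signed_elt_signed _ _)
  (signed_elt_neq0 _ _) (etrans (eigen_row k) (eigen_rhsE vk)) (mem_index_enum j).
rewrite eigen_termE // !smod_signed_elt.
case/(_ (signed_elt_signed _ _) (signed_elt_neq0 _ _)) => [/eqP|lt|/signed_elt_inj[-> ->]].
- by rewrite (negPf (signed_elt_neq0 _ _)).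
- by left.
- by right.
Qed.

Definition tight k j := [/\ v k != SZero, v j != SZero, A k j != SZero, k != j &
  smod (A k j) + smod (v j) = g + smod (v k)].

Lemma tight_smod k j : tight k j -> smod (A k j) = g + (smod (v k) - smod (v j)).
Proof. by case=> _ _ _ _ e; apply: (addIr (smod (v j))); rewrite e addrA subrK. Qed.

Lemma tight_sneg k j : tight k j -> sneg (A k j) = sneg (v k) (+) sneg (v j).
Proof.
case=> vk vj Akj _ e; case: (eigen_term_le vk vj Akj) => [|[_ <-]]; last by rewrite addbK.
by rewrite e ltxx.
Qed.

Lemma exists_tight k : k != ord0 -> v k != SZero -> exists j, tight k j.
Proof.
move=> k0 vk; have /big_sadd_smod_attained[j] :
    \big[@sadd G/SZero]_(j < n.+1) smul (A k j) (v j) != SZero.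
  by rewrite eigen_row eigen_rhsE // signed_elt_neq0.
rewrite smul_eq0 negb_or => /andP[Akj vj].
rewrite eigen_row eigen_rhsE // eigen_termE // !smod_signed_elt => e.
exists j; split=> //; apply/eqP => kj; move: e; rewrite -kj => /addIr dk.
by move: (diag_simple k0); rewrite dk ltxx.
Qed.

Definition potential k := smod (A k k) + (smod (v k) + smod (v k)).

Lemma tight_potential_lt k j : k != ord0 -> tight k j -> potential k < potential j.
Proof.
move=> k0 tkj; case: (tkj) => vk vj Akj kj e.
have h1 := A_offdiag_lt kj Akj; rewrite -(ltrD2rG (smod (v j) + smod (v j))) in h1.
rewrite addrACA e addrACA in h1.
have h2 : smod (A k k) + smod (A k k) < g + g by apply: ltrDG; apply: diag_simple.
rewrite -(ltrD2rG (smod (v k) + smod (v k))) in h2.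
by have := lt_trans h2 h1; rewrite -!addrA ltrD2lG.
Qed.

Lemma eigen_v0_neq0 : v ord0 != SZero.
Proof.
case: Hv => _ [k0 /eqP vk0] _.
have [k vk k_max] := exists_maximal potential (ex_intro (fun k => v k != SZero) k0 vk0).
have [<- //|k_neq0] := eqVneq k ord0.
have [j tkj] := exists_tight k_neq0 vk; case: (tkj) => _ vj _ _ _.
by move: (k_max j vj); rewrite (tight_potential_lt k_neq0 tkj).
Qed.

Lemma exists_tight_cycle k : k != ord0 -> v k != SZero ->
  exists2 s : 'S_n.+1, s ord0 = k &
    forall p, p != ord0 -> s p != p -> tight p (s p) /\ potential k <= potential p.
Proof.
move: {2}(n_above potential k).+1 (ltnSn (n_above potential k)) => m.
elim: m k => // m IH k; rewrite ltnS => le_m k0 vk; have [j tkj] := exists_tight k0 vk.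
have kj := tight_potential_lt k0 tkj.
have [j0|j_neq0] := eqVneq j ord0.
  exists (tperm ord0 k) => [|p p0]; first by rewrite tpermL.
  have [-> _|pk] := eqVneq p k; first by rewrite tpermR -j0.
  by rewrite tpermD 1?eq_sym // eqxx.
have vj : v j != SZero by case: tkj.
have [s s0 tight_s] := IH j (leq_trans (n_above_lt kj) le_m) j_neq0 vj.
have sk : s k = k.
  apply/eqP/negPn/negP => sk; have [_ le_jk] := tight_s k k0 sk.
  by move: (lt_le_trans kj le_jk); rewrite ltxx.
exists (tperm ord0 k * s)%g => [|p p0]; first by rewrite permM tpermL.
rewrite permM; have [->|pk] := eqVneq p k; first by rewrite tpermR s0.
rewrite tpermD 1?[k == _]eq_sym 1?[ord0 == _]eq_sym // => sp.
have [tp le_jp] := tight_s p p0 sp.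
by split=> //; apply/ltW/(lt_le_trans kj).
Qed.

Section Minor.
Variable i : 'I_n.+1.

Local Notation M := (sshift (A ord0 ord0) A).
Local Notation lifted sig := (lift_perm ord0 i sig).

Lemma shift_diag k : k != ord0 -> M k k = A ord0 ord0.
Proof.
move=> k0; have A00 : A ord0 ord0 != SZero by rewrite (TPD_diagE ord0 HA).
rewrite mxE eqxx saddC; apply/esym/(spreceq_signedP _ (A_signed _ _) A00).
by constructor 2; rewrite smod_sopp; apply: diag_simple.
Qed.

Lemma shift_offdiag k j : k != j -> M k j = sopp (A k j).
Proof. by move=> kj; rewrite mxE (negPf kj) sadd0l. Qed.

Lemma shift_signed k j : k != ord0 -> ssigned (M k j).
Proof.
move=> k0; have [<-|kj] := eqVneq k j; first by rewrite shift_diag //; apply: A_signed.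
by rewrite shift_offdiag //; apply/sopp_signed/A_signed.
Qed.

(* The term of [sig] in the minor is read on [lifted sig], the permutation of
   'I_n.+1 sending 0 to i and lift 0 p to lift i (sig p). *)
Definition minor_factor (sig : 'S_n) (p : 'I_n) := M (lift ord0 p) (lifted sig (lift ord0 p)).

Definition minor_term (sig : 'S_n) :=
  smul (ssignpow G (odd_perm sig)) (\big[@smul G/sone G]_(p < n) minor_factor sig p).

Lemma minorE : sdet (row' ord0 (col' i M)) = \big[@sadd G/SZero]_(sig : 'S_n) minor_term sig.
Proof.
apply: eq_bigr => sig _; congr smul; apply: eq_bigr => p _.
by rewrite /minor_factor lift_perm_lift !mxE.
Qed.

Lemma minor_term_eq0_or_factors sig :
  minor_term sig = SZero \/ forall p, minor_factor sig p != SZero.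
Proof.
have [/forallP|/forallPn[p /negPn/eqP f0]] := boolP [forall p, minor_factor sig p != SZero].
  by right.
by left; rewrite /minor_term big_smul_eq0 ?smulr0 //; exists p; rewrite ?mem_index_enum.
Qed.

Lemma minor_termE sig : (forall p, minor_factor sig p != SZero) ->
  minor_term sig = signed_elt (odd_perm sig (+) \big[addb/false]_(p < n) sneg (minor_factor sig p))
                              (\sum_(p < n) smod (minor_factor sig p)).
Proof.
move=> nz; rewrite /minor_term big_smul_signed => [|p _].
  by rewrite ssignpow_bool smul_signed_elt add0r.
by split; [apply/shift_signed/lift0_neq0 | apply: nz].
Qed.

Lemma v_eq0_lifted sig : (forall p, minor_factor sig p != SZero) ->
  forall k, v k == SZero -> v (lifted sig k) == SZero.
Proof.
move=> nz k /eqP vk; case: (unliftP ord0 k) => [p ek|ek]; last first.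
  by move: eigen_v0_neq0; rewrite -ek vk eqxx.
have [-> //|kj] := eqVneq (lifted sig k) k; first exact/eqP.
have Akj : A k (lifted sig k) != SZero.
  by move: (nz p); rewrite /minor_factor -ek shift_offdiag ?sopp_eq0 // eq_sym.
by move/eqP: (eigen_term_eq0 (lifted sig k) vk); rewrite smul_eq0 (negPf Akj).
Qed.

Definition top_bound (s : 'S_n.+1) k := g + (smod (v k) - smod (v (s k))).

Definition top_modulus := g *+ n + (smod (v i) - smod (v ord0)).

Definition top_term := signed_elt (odd i (+) (sneg (v ord0) (+) sneg (v i))) top_modulus.

Lemma sum_top_bound sig : \sum_(p < n) top_bound (lifted sig) (lift ord0 p) = top_modulus.
Proof.
rewrite big_split sumr_const card_ord /=.
by rewrite (telescope_lift_perm _ (fun k => smod (v k))) lift_perm_id.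
Qed.

Lemma minor_factor_bound sig (p : 'I_n) : (forall q, minor_factor sig q != SZero) ->
  let k := lift ord0 p in
  smod (minor_factor sig p) < top_bound (lifted sig) k \/
  smod (minor_factor sig p) = top_bound (lifted sig) k /\
    (lifted sig k = k \/ tight k (lifted sig k)).
Proof.
move=> nz k; rewrite /minor_factor /top_bound -/k.
have [jk|jk] := eqVneq (lifted sig k) k.
  by right; rewrite jk shift_diag ?lift0_neq0 // subrr addr0; split=> //; left.
have Akj : A k (lifted sig k) != SZero.
  by move: (nz p); rewrite /minor_factor -/k shift_offdiag ?sopp_eq0 // eq_sym.
rewrite shift_offdiag ?smod_sopp; last by rewrite eq_sym.
have [vk|vk] := eqVneq (v k) SZero.
  have /eqP vj := v_eq0_lifted nz (introT eqP vk).
  left; rewrite vk vj subrr addr0; apply: A_offdiag_lt_top => //.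
    by apply/eqP => e; move: eigen_v0_neq0; rewrite -e vj.
  by rewrite eq_sym.
have vj : v (lifted sig k) != SZero.
  by apply: contra vk; apply: perm_closedV (v_eq0_lifted nz) _.
case: (eigen_term_le vk vj Akj) => [lt|[e _]].
  by left; rewrite -(ltrD2rG (smod (v (lifted sig k)))) addrA subrK.
right; split; first by apply: (addIr (smod (v (lifted sig k)))); rewrite e addrA subrK.
by right; split; rewrite // eq_sym.
Qed.

Definition tight_perm (s : 'S_n.+1) := forall k, k != ord0 -> s k = k \/ tight k (s k).

Lemma minor_factor_tight sig (p : 'I_n) : tight_perm (lifted sig) ->
  minor_factor sig p =
  signed_elt ((lifted sig (lift ord0 p) != lift ord0 p)
                (+) (sneg (v (lift ord0 p)) (+) sneg (v (lifted sig (lift ord0 p)))))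
             (top_bound (lifted sig) (lift ord0 p)).
Proof.
move=> tp; rewrite /minor_factor /top_bound; set k := lift ord0 p.
case: (tp k (lift0_neq0 p)) => [->|tkj].
  by rewrite shift_diag ?lift0_neq0 // eqxx addbb subrr addr0 [LHS](TPD_diagE ord0 HA).
have [_ _ Akj kj _] := tkj.
have nAkj : sopp (A k (lifted sig k)) != SZero by rewrite sopp_eq0.
rewrite (shift_offdiag kj) [LHS](signed_eltE (sopp_signed (A_signed _ _)) nAkj).
by rewrite (sneg_sopp (A_signed _ _) Akj) smod_sopp (tight_sneg tkj) (tight_smod tkj) eq_sym kj.
Qed.

Lemma odd_perm_tight sig : tight_perm (lifted sig) ->
  odd_perm sig = odd i (+) \big[addb/false]_(p < n) (lifted sig (lift ord0 p) != lift ord0 p).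
Proof.
move=> tp; have incr k : k != ord0 -> lifted sig k != k -> potential k < potential (lifted sig k).
  by move=> k0 sk; case: (tp k k0) => [e|/(tight_potential_lt k0) //]; rewrite e eqxx in sk.
have := odd_lift_perm ord0 i sig; rewrite (odd_perm_increasing incr) big_ord_recl eqxx /=.
by move=> ->; rewrite addKb.
Qed.

Lemma minor_term_tight sig : tight_perm (lifted sig) -> minor_term sig = top_term.
Proof.
move=> tp; rewrite minor_termE => [|p]; last by rewrite minor_factor_tight // signed_elt_neq0.
under eq_bigr => p _ do rewrite minor_factor_tight // sneg_signed_elt.
under [X in signed_elt _ X]eq_bigr => p _ do rewrite minor_factor_tight // smod_signed_elt.
rewrite sum_top_bound big_split (telescope_lift_perm_addb _ (fun k => sneg (v k))) /=.
by rewrite lift_perm_id (odd_perm_tight tp) addbA addbK.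
Qed.

Lemma minor_term_spreceq sig : spreceq (minor_term sig) top_term.
Proof.
apply/(spreceq_signedP _ (signed_elt_signed _ _) (signed_elt_neq0 _ _)).
case: (minor_term_eq0_or_factors sig) => [->|nz]; first by constructor 1.
have le_bound p : smod (minor_factor sig p) <= top_bound (lifted sig) (lift ord0 p).
  by case: (minor_factor_bound p nz) => [/ltW // | [-> _]].
have [/existsP[p lt_p]|/existsPn not_lt] :=
  boolP [exists p, smod (minor_factor sig p) < top_bound (lifted sig) (lift ord0 p)].
  constructor 2; rewrite minor_termE // !smod_signed_elt -(sum_top_bound sig).
  by apply: ltr_sumG le_bound _; exists p.
constructor 3; apply: minor_term_tight => k k0.
case: (unliftP ord0 k) k0 => [p -> _|->]; last by rewrite eqxx.
by case: (minor_factor_bound p nz) => [lt_p|[_ //]]; move: (not_lt p); rewrite lt_p.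
Qed.

Lemma exists_tight_perm : v i != SZero -> exists sig, tight_perm (lifted sig).
Proof.
move=> vi; have [i0|i0] := eqVneq i ord0.
  by exists 1%g; rewrite i0 lift_perm1 => k _; left; rewrite perm1.
have [s s0 tight_s] := exists_tight_cycle i0 vi.
have [sig e] := lift_perm_surj s0; exists sig; rewrite e => k k0.
by have [|sk] := eqVneq (s k) k; [left | right; case: (tight_s k k0 sk)].
Qed.

Lemma minor_signed : ssigned (sdet (row' ord0 (col' i M))).
Proof.
rewrite minorE; have [vi|vi] := eqVneq (v i) SZero.
  suff -> : \big[@sadd G/SZero]_sig minor_term sig = SZero by [].
  elim/big_rec: _ => // sig a _ ->; rewrite sadd0r.
  case: (minor_term_eq0_or_factors sig) => // nz.
  have /negP[] := eigen_v0_neq0; apply: (perm_closedV (v_eq0_lifted nz)).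
  by rewrite lift_perm_id vi.
have -> : \big[@sadd G/SZero]_sig minor_term sig = top_term.
  apply: big_sadd_eq; [exact: signed_elt_signed | exact: signed_elt_neq0 | |].
    by move=> sig _; apply: minor_term_spreceq.
  by have [sig tp] := exists_tight_perm vi; exists sig; rewrite ?mem_index_enum ?minor_term_tight.
exact: signed_elt_signed.
Qed.

End Minor.

End Eigenvector.

End SymmetrizedTropical.

Theorem corollary5p20 (G : porderZmodType) (HG : div_tot_ord_group G)
    (n : nat) (A : 'M[smax G]_n.+1) :
  TPD A ->
  (forall i j : 'I_n.+1, (i <= j)%N -> spreceq (A j j) (A i i)) ->
  (forall i : 'I_n.+1, nat_of_ord i = 1%N -> ssucc (A ord0 ord0) (A i i)) ->
  ~ (forall i : 'I_n.+1, ssigned (sadj (sshift (A ord0 ord0) A) i ord0)) ->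
  ~ (exists v : 'I_n.+1 -> smax G, strong_eigenvector A (A ord0 ord0) v).
Proof.
move=> HA Hord Hsucc not_signed [v Hv]; apply: not_signed => i.
rewrite mxE; apply: smul_signed; first exact: ssignpow_signed.
have diag_simple k : k != ord0 -> smod (A k k) < smod (A ord0 ord0).
  by move=> k0; apply: (TPD_diag_simple HG HA Hord Hsucc k0).
exact: (minor_signed HG HA diag_simple Hv i).
Qed.
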